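(* Let $N$ be a positive integer, let $\Delta\neq 1$ be a fundamental discriminant, $r\in\mathbb{Z}$ with $\Delta\equiv r^2\pmod{4N}$, $h\in\mathcal{D}$ and $\ell\in\mathrm{Iso}(V)$. If $\mathfrak{d}_{\Delta,r}(\ell,h)\neq 0$, then $p^2\mid N$ for every prime $p\mid\Delta$. In particular, if $N$ is square-free and $\Delta\neq 1$, then $\mathfrak{d}_{\Delta,r}(\ell,h)=0$ always.
   Context: $V$ is the space of trace-zero rational $2\times2$ matrices with $Q(\lambda)=N\det\lambda$ and $(\lambda,\mu)=-N\operatorname{tr}(\lambda\mu)$; $\mathrm{Iso}(V)$ is the set of isotropic lines in $V$. $L=\left\{\begin{pmatrix} b & -a/N\\ c & -b\end{pmatrix}: a,b,c\in\mathbb{Z}\right\}$, $L'=\left\{\begin{pmatrix} b/2N & -a/N\\ c & -b/2N\end{pmatrix}: a,b,c\in\mathbb{Z}\right\}$, $\mathcal{D}=L'/L$. For $\ell\in\mathrm{Iso}(V)$ let $\lambda_\ell$ be a primitive generator of $\ell\cap L$. For $k\in\mathcal{D}$ (viewed as a coset $L+k\subset L'$) put $\delta_\ell(k)=1$ if $\ell\cap(L+k)\neq\emptyset$ and $\delta_\ell(k)=0$ otherwise. If $\delta_\ell(k)=1$, then $\ell\cap(L+k)=\mathbb{Z}\lambda_\ell+k_\ell$ for some $k_\ell=s\lambda_\ell$, $s\in\mathbb{Q}$; writing $s=u/w$ in lowest terms ($w>0$) define $d(\ell,k)=w$ (it depends only on $\ell$ and $k$) and $k'_\ell=\frac{1}{d(\ell,k)}\lambda_\ell$.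 For $\delta=\begin{pmatrix} b/2N & -a/N\\ c & -b/2N\end{pmatrix}\in L'$, $\chi_\Delta(\delta)=\left(\frac{\Delta}{n}\right)$ if $\Delta\mid b^2-4Nac$, $(b^2-4Nac)/\Delta$ is a square mod $4N$ and $\gcd(a,b,c,\Delta)=1$ ($n$ any integer coprime to $\Delta$ represented by $[a,b,Nc]$), else $0$. For $\Delta\neq1$ define $\mathfrak{d}_{\Delta,r}(\ell,h)=\chi_\Delta((rh)'_\ell)$ if $\delta_\ell(rh)=1$ and $\Delta\mid d(\ell,rh)$, and $\mathfrak{d}_{\Delta,r}(\ell,h)=0$ otherwise. *)

From HB Require Import structures.
From mathcomp Require Import all_boot all_order all_algebra.
From Stdlib Require Import ClassicalEpsilon.
Set Implicit Arguments. Unset Strict Implicit. Unset Printing Implicit Defensive.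
Import Order.TTheory GRing.Theory Num.Theory.
Local Open Scope ring_scope.

Definition pif {A : Type} (P : Prop) (x y : A) : A :=
  if excluded_middle_informative P then x else y.

(* classical choice of an element satisfying P (arbitrary if none exists) *)
Definition pick_int (P : int -> Prop) : int := epsilon (inhabits 0%R) P.
Definition pick_rat (P : rat -> Prop) : rat := epsilon (inhabits 0%R) P.

(* Legendre symbol for an odd prime p, via Euler's criterion *)
Definition legendre (D : int) (p : nat) : int :=
  let e := ((D %% p%:Z)%Z ^+ (p.-1 %/ 2)%N %% p%:Z)%Z in
  if e == 0 then 0 else if e == 1 then 1 else -1.

Definition kron2 (D : int) : int :=
  let m := (D %% 8)%Z in
  if (m == 1) || (m == 7) then 1 else if (m == 3) || (m == 5) then -1 else 0.

Definition kron_prime (D : int) (p : nat) : int :=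
  if p == 2%N then kron2 D else legendre D p.

Definition kron_m1 (D : int) : int := if D < 0 then -1 else 1.

Definition kron (D n : int) : int :=
  if n == 0 then (if `|D| == 1 then 1 else 0)
  else (if n < 0 then kron_m1 D else 1) *
       \prod_(pe <- prime_decomp `|n|%N) kron_prime D pe.1 ^+ pe.2.

Definition squarefree_int (m : int) : Prop :=
  m != 0 /\ forall p : nat, prime p -> ~ ((p ^ 2)%:Z %| m)%Z.

Definition fundamental_discriminant (D : int) : Prop :=
  ((D %% 4)%Z = 1 /\ squarefree_int D) \/
  (exists m : int, D = 4 * m /\ ((m %% 4)%Z = 2 \/ (m %% 4)%Z = 3) /\ squarefree_int m).

Definition Lmx (N : nat) (a b c : rat) : 'M[rat]_2 :=
  \matrix_(i < 2, j < 2)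
    if i == ord0 then (if j == ord0 then b else - (a / N%:R))
    else (if j == ord0 then c else - b).

Definition inV (M : 'M[rat]_2) : Prop := \tr M = 0.

Definition Qform (N : nat) (M : 'M[rat]_2) : rat := N%:R * \det M.

Definition inL (N : nat) (M : 'M[rat]_2) : Prop :=
  exists a b c : int, M = Lmx N a%:~R b%:~R c%:~R.

Definition inL' (N : nat) (M : 'M[rat]_2) : Prop :=
  exists a b c : int, M = Lmx N a%:~R (b%:~R / (2 * N)%:R) c%:~R.

(* an isotropic line ell in Iso(V) is given by a nonzero isotropic generator lam0 *)
Definition isotropic_gen (N : nat) (lam0 : 'M[rat]_2) : Prop :=
  lam0 != 0 /\ inV lam0 /\ Qform N lam0 = 0.

Definition on_line (lam0 M : 'M[rat]_2) : Prop := exists t : rat, M = t *: lam0.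

Definition primitive_gen (N : nat) (lam0 lam : 'M[rat]_2) : Prop :=
  on_line lam0 lam /\ inL N lam /\
  forall M, on_line lam0 M -> inL N M -> exists m : int, M = m%:~R *: lam.

Definition delta_ell (N : nat) (lam0 k : 'M[rat]_2) : Prop :=
  exists M, on_line lam0 M /\ inL N (M - k).

Definition kell_coeff (N : nat) (lam0 lam k : 'M[rat]_2) (s : rat) : Prop :=
  forall M, (on_line lam0 M /\ inL N (M - k)) <->
            exists m : int, M = (m%:~R + s) *: lam.

Definition d_ell (N : nat) (lam0 lam k : 'M[rat]_2) : int :=
  denq (pick_rat (kell_coeff N lam0 lam k)).

Definition represents (a b c : int) (n : int) : Prop :=
  exists x y : int, n = a * x ^+ 2 + b * x * y + c * y ^+ 2.

Definition chi_coords (N : nat) (D a b c : int) : int :=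
  let disc := b ^+ 2 - 4 * N%:Z * a * c in
  pif [/\ (D %| disc)%Z,
          exists x : int, ((disc %/ D)%Z = x ^+ 2 %[mod (4 * N)%:Z])%Z
        & gcdz (gcdz a b) (gcdz c D) = 1]
      (kron D (pick_int (fun n => coprimez n D /\ represents a b (N%:Z * c) n)))
      0.

(* delta = [[b/2N, -a/N], [c, -b/2N]] in L' *)
Definition chi (N : nat) (D : int) (delta : 'M[rat]_2) : int :=
  pif (inL' N delta)
      (chi_coords N D (numq (- (N%:R * delta ord0 (lift ord0 ord0))))
                      (numq ((2 * N)%:R * delta ord0 ord0))
                      (numq (delta (lift ord0 ord0) ord0)))
      0.

(* frak d_{Delta,r}(ell, h): ell given by lam0, lam = chosen primitive generator
   lambda_ell, h given by a representative k in L' *)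
Definition frakd (N : nat) (D r : int) (lam0 lam k : 'M[rat]_2) : int :=
  let rk := r%:~R *: k in
  pif (delta_ell N lam0 rk /\ (D %| d_ell N lam0 lam rk)%Z)
      (chi N D ((d_ell N lam0 lam rk)%:~R^-1 *: lam))
      0.

From mathcomp Require Import all_boot all_order all_algebra.
From mathcomp Require Import ring.
From Stdlib Require Import ClassicalEpsilon.
Set Implicit Arguments. Unset Strict Implicit. Unset Printing Implicit Defensive.
Import Order.TTheory GRing.Theory Num.Theory.
Local Open Scope ring_scope.

(* Write [lam = Lmx N a b c] and [ell ∩ (L + k) = Z lam + s lam].  Since [s lam]
   lies in [L + k] with [k] in [L'], both [s a] and [s c] are integers, so
   [d(ell, k) = denq s] divides [a] and [c].  A prime [p] of [Delta] hence divides
   [a] and [c] but not [b] ([lam] is primitive), and isotropy [N b^2 = a c] forces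
   [p^2 | N].  Neither [chi_Delta] nor the congruence [Delta = r^2] plays a role. *)

Definition i1 : 'I_2 := @Ordinal 2 1 isT.

Lemma ord2P (i : 'I_2) : i = ord0 \/ i = i1.
Proof. by case: i => [[|[|//]] Hi]; [left|right]; apply: val_inj. Qed.

Lemma mx2_ext (R : Type) (A B : 'M[R]_2) :
  A ord0 ord0 = B ord0 ord0 -> A ord0 i1 = B ord0 i1 ->
  A i1 ord0 = B i1 ord0 -> A i1 i1 = B i1 i1 -> A = B.
Proof.
move=> e00 e01 e10 e11; apply/matrixP => i j.
by case: (ord2P i) => ->; case: (ord2P j) => ->.
Qed.

Lemma det_mx2 (R : comNzRingType) (A : 'M[R]_2) :
  \det A = A ord0 ord0 * A i1 i1 - A ord0 i1 * A i1 ord0.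
Proof.
rewrite (expand_det_row _ ord0) !big_ord_recl big_ord0 /cofactor !det_mx11 /=.
rewrite !mxE /= expr0 expr1 mul1r mulN1r addr0 mulrN.
by congr (_ * A _ _ - A _ _ * A _ _); apply: val_inj.
Qed.

Lemma tr_mx2 (R : nmodType) (A : 'M[R]_2) : \tr A = A ord0 ord0 + A i1 i1.
Proof.
rewrite /mxtrace !big_ord_recl big_ord0 addr0.
by congr (A _ _ + A _ _); apply: val_inj.
Qed.

Lemma denq_dvdz (s : rat) (a : int) : s * a%:~R \is a Num.int -> (denq s %| a)%Z.
Proof.
move=> /intrP [z hz].
have e : numq s * a = z * denq s.
  by apply: (intr_inj (R:=rat)); rewrite !intrM numqE -hz mulrAC.
have : (`|denq s| %| `|numq s| * `|a|)%N by rewrite -abszM e abszM dvdn_mull.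
by rewrite Gauss_dvdr // coprime_sym coprime_num_den.
Qed.

Section Lattice.
Variable N : nat.
Hypothesis N_gt0 : (0 < N)%N.

Let NR_neq0 : (N%:R : rat) != 0.
Proof. by rewrite pnatr_eq0 -lt0n. Qed.

Lemma inLP M :
  inL N M <-> [/\ M i1 i1 = - M ord0 ord0, M ord0 ord0 \is a Num.int,
                  N%:R * M ord0 i1 \is a Num.int & M i1 ord0 \is a Num.int].
Proof.
split.
  case=> a [b [c ->]]; rewrite !mxE /=.
  by split; rewrite ?intr_int // mulrN mulrC divfK // rpredN intr_int.
case=> e11 /intrP [b hb] /intrP [a ha] /intrP [c hc].
exists (- a), b, c; apply: mx2_ext; rewrite !mxE /= ?e11 ?hb //.
by rewrite intrN -ha mulNr opprK mulrC mulKf.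
Qed.

Lemma inL'_coords M :
  inL' N M -> N%:R * M ord0 i1 \is a Num.int /\ M i1 ord0 \is a Num.int.
Proof.
case=> a [b [c ->]]; rewrite !mxE /=.
by rewrite mulrN mulrC divfK // rpredN intr_int.
Qed.

Lemma inL'Z (m : int) M : inL' N M -> inL' N (m%:~R *: M).
Proof.
case=> a [b [c ->]]; exists (m * a), (m * b), (m * c).
by apply: mx2_ext; rewrite !mxE /= !intrM; ring.
Qed.

Lemma inLD M M' : inL N M -> inL N M' -> inL N (M + M').
Proof.
move=> /inLP [e11 h00 h01 h10] /inLP [e11' h00' h01' h10'].
apply/inLP; rewrite !mxE e11 e11' opprD mulrDr.
by split; rewrite ?rpredD.
Qed.

Lemma inLZ (m : int) M : inL N M -> inL N (m%:~R *: M).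
Proof.
move=> /inLP [e11 h00 h01 h10]; apply/inLP; rewrite !mxE e11 mulrN mulrCA.
by split => //; apply: rpredM => //; apply: intr_int.
Qed.

Lemma inLB M M' : inL N M -> inL N M' -> inL N (M - M').
Proof. by move=> hM /(inLZ (-1)); rewrite scaleN1r; apply: inLD. Qed.

Lemma inV_intr_multiple M :
  inV M -> exists2 n : int, n != 0 & inL N (n%:~R *: M).
Proof.
rewrite /inV tr_mx2 => /eqP; rewrite addrC addr_eq0 => /eqP e11.
set x := M ord0 ord0; set y := M ord0 i1; set z := M i1 ord0.
exists (N%:Z * denq x * denq y * denq z).
  by rewrite !mulf_eq0 !denq_eq0 !orbF -lt0n N_gt0.
apply/inLP; rewrite !mxE e11 mulrN; split => //; apply/intrP.
- by exists (N%:Z * numq x * denq y * denq z); rewrite !intrM numqE /x; ring.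
- by exists (N%:Z * N%:Z * denq x * numq y * denq z); rewrite !intrM numqE /y; ring.
- by exists (N%:Z * denq x * denq y * numq z); rewrite !intrM numqE /z; ring.
Qed.

Variables lam0 lam : 'M[rat]_2.
Hypothesis lam0_iso : isotropic_gen N lam0.
Hypothesis lam_prim : primitive_gen N lam0 lam.

Lemma primitive_gen_neq0 : lam != 0.
Proof.
case: lam0_iso => lam0_neq0 [lam0_V _]; case: lam_prim => _ [_ prim].
have [n n_neq0 hn] := inV_intr_multiple lam0_V.
have [m hm] := prim _ (ex_intro _ _ erefl) hn.
apply: contra_neq n_neq0 => lam_eq0; move/eqP: hm.
by rewrite lam_eq0 scaler0 scaler_eq0 (negbTE lam0_neq0) orbF intr_eq0 => /eqP.
Qed.

Lemma kell_coeff_exists k : delta_ell N lam0 k -> exists s, kell_coeff N lam0 lam k s.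
Proof.
move=> [_ [[t ->] hk]]; case: lam_prim => [[u hu] [lam_L prim]].
have u_neq0 : u != 0.
  by apply: contraNneq primitive_gen_neq0 => u0; rewrite hu u0 scale0r.
exists (t / u) => M; split.
  case=> [[t' ->] hM]; have := inLB hM hk.
  rewrite opprB addrA subrK -scalerBl => /(prim _ (ex_intro _ _ erefl)) [m hm].
  by exists m; rewrite scalerDl -hm hu scalerA divfK // -scalerDl subrK.
case=> m ->; split; first by exists ((m%:~R + t / u) * u); rewrite hu scalerA.
rewrite scalerDl -addrA; apply: inLD; first exact: inLZ.
by rewrite {1}hu scalerA divfK.
Qed.

Lemma d_ell_spec k : delta_ell N lam0 k ->
  exists2 s, kell_coeff N lam0 lam k s & d_ell N lam0 lam k = denq s.
Proof.
move=> /kell_coeff_exists [s hs].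
by exists (pick_rat (kell_coeff N lam0 lam k)) => //; apply: epsilon_spec; exists s.
Qed.

Lemma d_ell_dvd_coords k a b c : lam = Lmx N a%:~R b%:~R c%:~R ->
  inL' N k -> delta_ell N lam0 k ->
  (d_ell N lam0 lam k %| a)%Z /\ (d_ell N lam0 lam k %| c)%Z.
Proof.
move=> lamE /inL'_coords [k01 k10] /d_ell_spec [s hs ->].
have s_lam : s *: lam = ((0 : int)%:~R + s) *: lam by rewrite add0r.
have [_ /inLP [_ _]] := proj2 (hs _) (ex_intro _ 0 s_lam).
rewrite !mxE lamE !mxE /= => h01 h10; split; apply: denq_dvdz.
  have -> : s * a%:~R = - (N%:R * (s * - (a%:~R / N%:R) + - k ord0 i1))
                        - N%:R * k ord0 i1 by field.
  by rewrite rpredB ?rpredN.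
have -> : s * c%:~R = (s * c%:~R + - k i1 ord0) + k i1 ord0 by ring.
by rewrite rpredD.
Qed.

Lemma primitive_gen_isotropy a b c :
  lam = Lmx N a%:~R b%:~R c%:~R -> N%:Z * b ^+ 2 = a * c.
Proof.
move=> lamE; case: lam0_iso => _ [_ /eqP]; case: lam_prim => [[u hu] _].
rewrite /Qform mulf_eq0 (negbTE NR_neq0) /= => /eqP det0.
have : \det lam = 0 by rewrite hu detZ det0 mulr0.
rewrite det_mx2 lamE !mxE /= => /eqP; rewrite subr_eq0 => /eqP det0'.
apply: (intr_inj (R:=rat)); rewrite !intrM -pmulrn.
by rewrite -[b%:~R * _]opprK -mulrN det0'; field.
Qed.

Lemma primitive_gen_coprime p a b c : prime p ->
  lam = Lmx N a%:~R b%:~R c%:~R ->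
  (p%:Z %| a)%Z -> (p%:Z %| b)%Z -> (p%:Z %| c)%Z -> False.
Proof.
move=> p_prime lamE /dvdzP [a' ea] /dvdzP [b' eb] /dvdzP [c' ec]; subst a b c.
case: lam_prim => [[u hu] [_ prim]].
have pR_neq0 : (p%:R : rat) != 0 by rewrite pnatr_eq0 -lt0n prime_gt0.
have lam_p : Lmx N a'%:~R b'%:~R c'%:~R = (p%:R)^-1 *: lam.
  by apply: mx2_ext; rewrite lamE !mxE /= !intrM -!pmulrn;
    field; rewrite ?pR_neq0 ?NR_neq0.
have [m hm] : exists m : int, Lmx N a'%:~R b'%:~R c'%:~R = m%:~R *: lam.
  by apply: prim; [exists ((p%:R)^-1 * u); rewrite lam_p hu scalerA | exists a', b', c'].
have /eqP : ((p%:R)^-1 - m%:~R) *: lam = 0 by rewrite scalerBl -lam_p hm subrr.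
rewrite scaler_eq0 (negbTE primitive_gen_neq0) orbF subr_eq0 => /eqP pm.
have /(congr1 absz) : p%:Z * m = 1.
  by apply: (intr_inj (R:=rat)); rewrite intrM -pm pmulrn mulfV.
rewrite abszM absz_nat => /eqP; rewrite muln_eq1 => /andP [/eqP p1 _].
by rewrite p1 in p_prime.
Qed.

Lemma primitive_gen_prime_sq_dvd p a b c : prime p ->
  lam = Lmx N a%:~R b%:~R c%:~R ->
  (p%:Z %| a)%Z -> (p%:Z %| c)%Z -> (p ^ 2 %| N)%N.
Proof.
move=> p_prime lamE pa pc.
have /(congr1 absz) := primitive_gen_isotropy lamE.
rewrite !abszM absz_nat mulnn => isoN.
have [pb | npb] := boolP (p %| `|b|)%N.
  by case: (primitive_gen_coprime p_prime lamE pa pb pc).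
have cop : coprime (p ^ 2) (`|b| ^ 2).
  by rewrite coprime_pexpl // coprime_pexpr // prime_coprime.
by rewrite -(Gauss_dvdl N cop) isoN -mulnn dvdn_mul.
Qed.

End Lattice.

Lemma fundamental_discriminant_prime_dvd D :
  fundamental_discriminant D -> D != 1 -> exists2 p : nat, prime p & (p%:Z %| D)%Z.
Proof.
case=> [[D4 [D_neq0 _]] D_neq1 | [m [-> _]] _]; last first.
  by exists 2%N => //; apply: dvdz_mulr.
have D_gt1 : (1 < `|D|)%N.
  by move: D4 D_neq0 D_neq1; case: D => [[|[|n]]|[|n]].
by exists (pdiv `|D|); [exact: pdiv_prime | exact: pdiv_dvd].
Qed.

Theorem proposition5p4 (N : nat) (D r : int) (lam0 lam k : 'M[rat]_2) :
  (0 < N)%N ->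
  fundamental_discriminant D -> D != 1 ->
  (D = r ^+ 2 %[mod (4 * N)%:Z])%Z ->
  inL' N k ->
  isotropic_gen N lam0 ->
  primitive_gen N lam0 lam ->
  (frakd N D r lam0 lam k != 0 ->
     forall p : nat, prime p -> (p%:Z %| D)%Z -> (p ^ 2 %| N)%N) /\
  (squarefree_int N%:Z -> frakd N D r lam0 lam k = 0).
Proof.
move=> N_gt0 D_fund D_neq1 _ k_L' lam0_iso lam_prim.
have frakd_prime_sq_dvd : frakd N D r lam0 lam k != 0 ->
    forall p : nat, prime p -> (p%:Z %| D)%Z -> (p ^ 2 %| N)%N.
  rewrite /frakd /pif; case: excluded_middle_informative => // -[rk_delta D_dvd_d] _.
  move=> p p_prime p_D; have [_ [[a [b [c lamE]]] _]] := lam_prim.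
  have [d_a d_c] :=
    d_ell_dvd_coords N_gt0 lam0_iso lam_prim lamE (inL'Z r k_L') rk_delta.
  apply: (primitive_gen_prime_sq_dvd N_gt0 lam0_iso lam_prim p_prime lamE);
    exact: dvdz_trans p_D (dvdz_trans D_dvd_d _).
split=> // -[_ N_sqfree]; apply/eqP; apply: contraT => frakd_neq0.
have [p p_prime p_D] := fundamental_discriminant_prime_dvd D_fund D_neq1.
by case: (N_sqfree p p_prime); apply: frakd_prime_sq_dvd.
Qed.
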